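(* For every $n\ge2$, the sum of the Wiener indices of all plane trees on $n$ vertices is $$\sum_T\ \sum_{\{u,w\}} d(u,w)=(n-1)4^{n-2},$$ where $T$ ranges over plane trees on $n$ vertices and $\{u,w\}$ over unordered pairs of distinct vertices of $T$. Consequently, the expected distance between a uniformly random pair of distinct vertices in a uniformly random plane tree on $n$ vertices equals $\frac{(2n-2)!!}{2(2n-3)!!}$. This equals the expected length of the root-to-leaf path for a uniformly random pair (plane tree on $n$ vertices, leaf of it).
   Context: General (plane) trees are rooted trees in which each vertex may have any number of children, linearly ordered. The size of a tree is its number of vertices, and a leaf is a vertex with no children. $d(u,w)$ is the number of edges of the path between $u$ and $w$. The double factorials are $(2m)!!=2\cdot4\cdots(2m)$ and $(2m-1)!!=1\cdot3\cdots(2m-1)$. *)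

From HB Require Import structures.
From mathcomp Require Import all_boot all_order all_algebra.
From Stdlib Require List.
Set Implicit Arguments. Unset Strict Implicit. Unset Printing Implicit Defensive.

Inductive ptree : Type := Node of seq ptree.

Fixpoint ptsize (t : ptree) : nat :=
  let: Node cs := t in
  (fix go (cs : seq ptree) : nat :=
     match cs with [::] => 0 | c :: cs' => ptsize c + go cs' end) cs + 1.

(* Vertices are identified by their address from the root: the sequence of
   child indices followed from the root ([::] is the root). *)
Fixpoint vertices (t : ptree) : seq (seq nat) :=
  let: Node cs := t in
  [::] :: (fix go (i : nat) (cs : seq ptree) : seq (seq nat) :=
     match cs with
     | [::] => [::]
     | c :: cs' => map (cons i) (vertices c) ++ go i.+1 cs'
     end) 0 cs.

Fixpoint leaves (t : ptree) : seq (seq nat) :=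
  let: Node cs := t in
  match cs with
  | [::] => [:: [::]]
  | _ => (fix go (i : nat) (cs : seq ptree) : seq (seq nat) :=
     match cs with
     | [::] => [::]
     | c :: cs' => map (cons i) (leaves c) ++ go i.+1 cs'
     end) 0 cs
  end.

(* length of the longest common prefix of two addresses
   (= depth of the lowest common ancestor) *)
Fixpoint lcp (u w : seq nat) : nat :=
  match u, w with
  | a :: u', b :: w' => if a == b then (lcp u' w').+1 else 0
  | _, _ => 0
  end.

(* d(u,w): number of edges of the tree path between vertices u and w
   (the path goes up from u to the lowest common ancestor, then down to w). *)
Definition dist (u w : seq nat) : nat := size u + size w - 2 * lcp u w.

Definition wiener (t : ptree) : nat :=
  let vs := vertices t in
  \sum_(j < size vs) \sum_(i < j) dist (nth [::] vs i) (nth [::] vs j).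

Fixpoint dfact (k : nat) : nat :=
  match k with
  | 0 => 1
  | 1 => 1
  | k'.+2 => k'.+2 * dfact k'
  end.

(* A plane tree with at least two vertices is uniquely [join c t]: its first
   subtree [c] grafted onto the remaining tree [t].  The number of vertices, the
   total depth, the total distance over ordered pairs of vertices, the number of
   leaves and the total leaf depth of [join c t] are bilinear in the same
   quantities for [c] and [t].  Summed over all trees with [m] edges they thus
   satisfy convolution recurrences, solved in closed form through the Catalan
   numbers, the central binomial coefficients b_m = C(2m, m) and 4^m, by means of
   the identities sum_a b_a b_(N-a) = 4^N, sum_a b_a Cat_(N-a) = b_(N+1)/2 and a
   few relatives.  For m >= 1 the distances total m 4^m / 2, the leaf depths
   4^(m-1) and the leaves b_m / 2; the Wiener index counts each pair once, and
   (2k)!! / (2k-1)!! = 4^k / b_k turns the quotients into double factorials. *)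

From HB Require Import structures.
From mathcomp Require Import all_boot all_order all_algebra.
From Stdlib Require List.
From mathcomp Require Import ring lra zify.
Import Order.TTheory GRing.Theory Num.Theory.
Set Implicit Arguments. Unset Strict Implicit. Unset Printing Implicit Defensive.

Definition leaf : ptree := Node [::].

Definition join (c t : ptree) : ptree := let: Node cs := t in Node (c :: cs).

Lemma ptsize_join c t : ptsize (join c t) = ptsize c + ptsize t.
Proof. by case: t => cs /=; rewrite addnA. Qed.

Lemma ptsize_gt0 t : 0 < ptsize t.
Proof. by case: t => cs /=; rewrite addn1. Qed.

Lemma ptree_join_ind (P : ptree -> Prop) :
  P leaf -> (forall c t, P c -> P t -> P (join c t)) -> forall t, P t.
Proof.
move=> Pleaf Pjoin t; move: {2}(ptsize t) (leqnn (ptsize t)) => n.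
elim: n t => [|n IH] [[|c cs]] //; rewrite -[Node (c :: cs)]/(join c (Node cs)) ptsize_join.
  by have := ptsize_gt0 c; lia.
have := ptsize_gt0 c; have := ptsize_gt0 (Node cs) => ? ? ?.
by apply: Pjoin; apply: IH; lia.
Qed.

Lemma join_inj c t c' t' : join c t = join c' t' -> c = c' /\ t = t'.
Proof. by case: t => cs; case: t' => cs' [-> ->]. Qed.

Fixpoint ptree_code (t : ptree) : GenTree.tree unit :=
  let: Node cs := t in GenTree.Node 0 (map ptree_code cs).

Fixpoint ptree_decode (c : GenTree.tree unit) : ptree :=
  if c is GenTree.Node _ cs then Node (map ptree_decode cs) else leaf.

Lemma ptree_codeK : cancel ptree_code ptree_decode.
Proof. by elim/ptree_join_ind => // c [cs] /= -> [->]. Qed.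

HB.instance Definition _ := Equality.copy ptree (can_type ptree_codeK).

Lemma In_mem (T : eqType) (x : T) (s : seq T) : List.In x s <-> x \in s.
Proof.
elim: s => [|y s IH] //=; rewrite in_cons eq_sym.
by split=> [[->|/IH->]|/orP[/eqP->|/IH]]; rewrite ?eqxx ?orbT; auto.
Qed.

Lemma NoDup_uniq (T : eqType) (s : seq T) : List.NoDup s -> uniq s.
Proof. by elim=> //= x {}s x_s _ ->; rewrite andbT; apply/negP => /In_mem. Qed.

Fixpoint trees_fuel (f n : nat) : seq ptree :=
  if f is f'.+1 then
    match n with
    | 0 => [::]
    | 1 => [:: leaf]
    | N.+2 => [seq join p.1 p.2 | k <- iota 1 N.+1,
                p <- [seq (x, y) | x <- trees_fuel f' k, y <- trees_fuel f' (N.+2 - k)]]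
    end
  else [::].

Definition trees n := trees_fuel n n.

Lemma trees_fuel_step f N : trees_fuel f.+1 N.+2 =
  [seq join p.1 p.2 | k <- iota 1 N.+1,
     p <- [seq (x, y) | x <- trees_fuel f k, y <- trees_fuel f (N.+2 - k)]].
Proof. by []. Qed.

Lemma trees_fuelS f n : n <= f -> trees_fuel f.+1 n = trees_fuel f n.
Proof.
elim: f n => [|f IH] [|[|N]] // le_n_f; rewrite !trees_fuel_step.
congr flatten; apply/eq_in_map => k; rewrite mem_iota => /andP[k_gt0 k_lt].
by rewrite !IH //; lia.
Qed.

Lemma trees_fuelE f n : n <= f -> trees_fuel f n = trees n.
Proof.
move=> /subnK <-; elim: (f - n) => // d IH.
by rewrite addSn trees_fuelS ?leq_addl.
Qed.

Lemma trees_step N : trees N.+2 =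
  [seq join p.1 p.2 | k <- iota 1 N.+1,
     p <- [seq (x, y) | x <- trees k, y <- trees (N.+2 - k)]].
Proof.
rewrite /trees trees_fuel_step; congr flatten; apply/eq_in_map => k.
by rewrite mem_iota => /andP[k_gt0 k_lt]; rewrite !trees_fuelE //; lia.
Qed.

Lemma mem_trees n t : 0 < n -> (t \in trees n) = (ptsize t == n).
Proof.
elim/ltn_ind: n t => -[|[|N]] // IH t _.
  rewrite inE; apply/eqP/eqP => [-> //|]; elim/ptree_join_ind: t => // c t _ _.
  by rewrite ptsize_join; have := ptsize_gt0 c; have := ptsize_gt0 t; lia.
rewrite trees_step; apply/allpairsPdep/eqP.
  case=> k [[x y] [k_in /allpairsP[[x' y'] /= [x_k y_k [-> ->]]] ->]].
  move: k_in x_k y_k; rewrite mem_iota => k_rng; rewrite !IH; try lia.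
  by rewrite ptsize_join => /eqP-> /eqP->; lia.
elim/ptree_join_ind: t => [/eqP //|c t _ _]; rewrite ptsize_join => size_ct.
have := ptsize_gt0 c; have := ptsize_gt0 t => t_gt0 c_gt0.
exists (ptsize c), (c, t); split => //; first by rewrite mem_iota; lia.
apply/allpairsP; exists (c, t).
by split=> //; rewrite IH ?eqxx //=; try apply/eqP; lia.
Qed.

Lemma trees_uniq n : uniq (trees n).
Proof.
elim/ltn_ind: n => -[|[|N]] // IH; rewrite trees_step.
apply: allpairs_uniq_dep => [|k /[!mem_iota] k_rng|].
- exact: iota_uniq.
- by apply: allpairs_uniq => [||[? ?] [? ?] _ _ []->->] //; apply/IH; lia.
set st := [seq Tagged _ _ | _ <- _, _ <- _].
have tag_size p : p \in st -> tag p = ptsize (tagged p).1.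
  case/allpairsPdep=> k [_ [/[!mem_iota] k_rng /allpairsP[[x y] [/= x_k _ ->]] ->]] /=.
  by apply/esym/eqP; rewrite -mem_trees //; case/andP: k_rng.
by move=> [k [x y]] [k' [x' y']] /tag_size /= -> /tag_size /= -> /join_inj[-> ->].
Qed.

(* The address in [join c t] of the vertex with address [u] in [t]. *)
Definition bump_head (u : seq nat) : seq nat := if u is i :: w then i.+1 :: w else [::].

Fixpoint child_vertices (i : nat) (cs : seq ptree) : seq (seq nat) :=
  if cs is c :: cs' then map (cons i) (vertices c) ++ child_vertices i.+1 cs' else [::].

Fixpoint child_leaves (i : nat) (cs : seq ptree) : seq (seq nat) :=
  if cs is c :: cs' then map (cons i) (leaves c) ++ child_leaves i.+1 cs' else [::].

Lemma vertices_node cs : vertices (Node cs) = [::] :: child_vertices 0 cs.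
Proof. by []. Qed.

Lemma leaves_node c cs : leaves (Node (c :: cs)) = child_leaves 0 (c :: cs).
Proof. by []. Qed.

Lemma child_verticesS i cs : child_vertices i.+1 cs = map bump_head (child_vertices i cs).
Proof. by elim: cs i => //= c cs IH i; rewrite IH map_cat -!map_comp. Qed.

Lemma child_leavesS i cs : child_leaves i.+1 cs = map bump_head (child_leaves i cs).
Proof. by elim: cs i => //= c cs IH i; rewrite IH map_cat -!map_comp. Qed.

Lemma big_vertices_join (F : seq nat -> nat) c t :
  \sum_(u <- vertices (join c t)) F u =
  \sum_(u <- vertices c) F (0 :: u) + \sum_(w <- vertices t) F (bump_head w).
Proof.
case: t => cs; rewrite /join !vertices_node [child_vertices 0 (c :: cs)]/= child_verticesS.
by rewrite !big_cons big_cat !big_map addnCA.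
Qed.

Definition is_leaf (t : ptree) : bool := if t is Node [::] then true else false.

Lemma leaves_join c t : leaves (join c t) =
  map (cons 0) (leaves c) ++ (if is_leaf t then [::] else map bump_head (leaves t)).
Proof.
case: t => -[|d ds]; first by rewrite [leaves _]/=.
by rewrite -[join _ _]/(Node [:: c, d & ds]) !leaves_node -child_leavesS.
Qed.

Lemma size_bump_head u : size (bump_head u) = size u.
Proof. by case: u. Qed.

Lemma size_vertices t : size (vertices t) = ptsize t.
Proof.
elim/ptree_join_ind: t => // c t IHc IHt.
by rewrite -sum1_size big_vertices_join !sum1_size IHc IHt ptsize_join.
Qed.

Definition depth_sum t := \sum_(u <- vertices t) size u.
Definition dist_sum t := \sum_(u <- vertices t) \sum_(w <- vertices t) dist u w.
Definition leaf_depth_sum t := \sum_(l <- leaves t) size l.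

Lemma depth_sum_join c t : depth_sum (join c t) = depth_sum c + ptsize c + depth_sum t.
Proof.
rewrite /depth_sum big_vertices_join -size_vertices -sum1_size -big_split /=.
by under [in RHS]eq_bigr do rewrite addn1; under [X in _ + X]eq_bigr do rewrite size_bump_head.
Qed.

Lemma distC u w : dist u w = dist w u.
Proof.
rewrite /dist addnC; congr (_ - 2 * _).
by elim: u w => [|a u IH] [|b w] //=; rewrite eq_sym IH.
Qed.

Lemma dist_xx u : dist u u = 0.
Proof.
have lcp_xx : lcp u u = size u by elim: u => //= a u ->; rewrite eqxx.
by rewrite /dist lcp_xx addnn mul2n subnn.
Qed.

Lemma dist_cons0 u w : dist (0 :: u) (0 :: w) = dist u w.
Proof. rewrite /dist /=; lia. Qed.

Lemma dist_bump_head u w : dist (bump_head u) (bump_head w) = dist u w.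
Proof. by case: u => [|i u]; case: w => [|j w]. Qed.

Lemma dist_cons0_bump_head u w : dist (0 :: u) (bump_head w) = (size u).+1 + size w.
Proof. by case: w => [|j w]; rewrite /dist /= ?addn0 ?subn0. Qed.

Lemma sum_sum_addn (A : Type) (r s : seq A) (f g : A -> nat) :
  \sum_(u <- r) \sum_(w <- s) (f u + g w) =
  (\sum_(u <- r) f u) * size s + size r * \sum_(w <- s) g w.
Proof.
have sum_const (T : Type) (q : seq T) k : \sum_(x <- q) k = k * size q.
  by rewrite big_const_seq count_predT iter_addn_0.
under eq_bigr do rewrite big_split /= sum_const.
by rewrite big_split /= -big_distrl sum_const [X in _ + X]mulnC.
Qed.

Lemma dist_sum_join c t : dist_sum (join c t) = dist_sum c + dist_sum t +
  2 * (depth_sum c * ptsize t + ptsize c * ptsize t + ptsize c * depth_sum t).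
Proof.
have cross : \sum_(u <- vertices c) \sum_(w <- vertices t) ((size u).+1 + size w) =
    (depth_sum c + ptsize c) * ptsize t + ptsize c * depth_sum t.
  rewrite sum_sum_addn !size_vertices; congr (_ * _ + _).
  rewrite /depth_sum -size_vertices -sum1_size -big_split /=.
  by apply: eq_bigr => u _; rewrite addn1.
rewrite /dist_sum big_vertices_join.
under eq_bigr do rewrite big_vertices_join.
under [X in _ + X]eq_bigr do rewrite big_vertices_join.
rewrite !big_split /=.
under eq_bigr do under eq_bigr do rewrite dist_cons0.
under [X in _ + X + _]eq_bigr do under eq_bigr do rewrite dist_cons0_bump_head.
rewrite [X in _ + (X + _)]exchange_big /=.
under [X in _ + (X + _)]eq_bigr do under eq_bigr do rewrite distC dist_cons0_bump_head.
under [X in _ + (_ + X)]eq_bigr do under eq_bigr do rewrite dist_bump_head.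
rewrite cross; lia.
Qed.

Lemma size_leaves_join c t :
  size (leaves (join c t)) + is_leaf t = size (leaves c) + size (leaves t).
Proof.
rewrite leaves_join size_cat size_map; case: t => -[|d ds]; first by rewrite addn0 addn1.
by rewrite [is_leaf _]/= size_map addn0.
Qed.

Lemma leaf_depth_sum_join c t :
  leaf_depth_sum (join c t) = leaf_depth_sum c + size (leaves c) + leaf_depth_sum t.
Proof.
rewrite /leaf_depth_sum leaves_join big_cat big_map -sum1_size -big_split /=.
under [in RHS]eq_bigr do rewrite addn1.
case: t => -[|d ds]; first by rewrite big_nil big_seq1.
by rewrite [is_leaf _]/= big_map; under [X in _ + X]eq_bigr do rewrite size_bump_head.
Qed.

Lemma sum_triangle (h : nat -> nat -> nat) n :
  (forall i j, h i j = h j i) -> (forall i, h i i = 0) ->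
  2 * \sum_(j < n) \sum_(i < j) h i j = \sum_(i < n) \sum_(j < n) h i j.
Proof.
move=> hC h0; elim: n => [|n IH]; first by rewrite !big_ord0.
rewrite !big_ord_recr /= mulnDr IH h0 addn0.
under [X in _ = X + _]eq_bigr do rewrite big_ord_recr.
rewrite big_split /=; under [X in _ = _ + X + _]eq_bigr do rewrite hC.
under [X in 2 * X]eq_bigr do rewrite hC.
lia.
Qed.

Lemma wiener_dist_sum t : 2 * wiener t = dist_sum t.
Proof.
rewrite -[wiener t]/(\sum_(j < size (vertices t)) \sum_(i < j)
   dist (nth [::] (vertices t) i) (nth [::] (vertices t) j)).
rewrite (@sum_triangle (fun i j => dist (nth [::] (vertices t) i) (nth [::] (vertices t) j)))
  => [|i j|i]; last 2 first.
- exact: distC.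
- exact: dist_xx.
rewrite /dist_sum (big_nth [::]) big_mkord.
by apply: eq_bigr => i _; rewrite (big_nth [::]) big_mkord.
Qed.

Lemma dfact_double k : dfact k.*2 = (2 ^ k * k`!)%N.
Proof. by elim: k => // k IH; rewrite doubleS /= IH factS expnS -addnn; lia. Qed.

Lemma dfact_mulS k : (dfact k.+1 * dfact k)%N = k.+1`!.
Proof. by elim: k => // k IH; rewrite [dfact k.+2]/= factS -IH; lia. Qed.

Lemma dfact_gt0 k : 0 < dfact k.
Proof. by elim/ltn_ind: k => -[|[|k]] // IH; rewrite /= muln_gt0 IH. Qed.

Local Open Scope ring_scope.

Ltac field_nz := field; repeat (apply/andP; split); apply/negP => /eqP; lra.

Implicit Types (f g : nat -> rat) (N : nat).

Definition conv f g N := \sum_(0 <= a < N.+1) f a * g (N - a)%N.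

Lemma convC f g N : conv f g N = conv g f N.
Proof.
rewrite /conv big_nat_rev /=; apply: eq_big_nat => a /andP[_ lt_a].
by rewrite add0n subSS subKn -1?ltnS // mulrC.
Qed.

Lemma eq_conv f1 f2 g1 g2 N :
  (forall a, (a <= N)%N -> f1 a = f2 a) -> (forall a, (a <= N)%N -> g1 a = g2 a) ->
  conv f1 g1 N = conv f2 g2 N.
Proof.
move=> ef eg; apply: eq_big_nat => a /andP[_ lt_a].
by rewrite ef -1?ltnS // eg // leq_subr.
Qed.

Lemma conv_recl f g N : conv f g N.+1 = f 0%N * g N.+1 + conv (fun a => f a.+1) g N.
Proof. by rewrite /conv big_nat_recl. Qed.

Lemma convDl f1 f2 g N : conv (fun a => f1 a + f2 a) g N = conv f1 g N + conv f2 g N.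
Proof. by rewrite /conv -big_split; apply: eq_bigr => a _; rewrite mulrDl. Qed.

Lemma convZl c f g N : conv (fun a => c * f a) g N = c * conv f g N.
Proof. by rewrite /conv mulr_sumr; apply: eq_bigr => a _; rewrite mulrA. Qed.

Lemma conv_weight (u v : nat -> rat) w f g N :
  (forall a, (a <= N)%N -> u a + v (N - a)%N = w) ->
  w * conv f g N = conv (fun a => u a * f a) g N + conv f (fun b => v b * g b) N.
Proof.
move=> uv_w; rewrite /conv mulr_sumr -big_split; apply: eq_big_nat => a /andP[_ lt_a].
by rewrite -(uv_w a) -1?ltnS //= mulrDl mulrA mulrCA.
Qed.

Lemma bin_double_succ m : ('C(m.+1.*2, m.+1) * m.+1 = (4 * m + 2) * 'C(m.*2, m))%N.
Proof.
have e1 := mul_bin_diag m.+1.*2 m.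
have e2 := mul_bin_diag m.*2.+1 m.
have e3 : 'C(m.*2.+1, m.+1) = 'C(m.*2.+1, m).
  by rewrite -[in RHS]bin_sub; [congr 'C(_, _) |]; rewrite -addnn; lia.
rewrite doubleS /= in e1 *; rewrite e3 in e2; move: e1 e2; rewrite -!addnn.
by move: 'C(_, m.+1) 'C(_, m) 'C(m + m, m) => x y z; nia.
Qed.

Definition cbin m : rat := 'C(m.*2, m)%:R.
Definition catalan m : rat := cbin m / m.+1%:R.

Lemma cbin_gt0 m : 0 < cbin m.
Proof. by rewrite ltr0n bin_gt0 -addnn leq_addl. Qed.

Lemma cbin0 : cbin 0 = 1. Proof. by []. Qed.
Lemma cbin1 : cbin 1 = 2. Proof. by []. Qed.
Lemma catalan0 : catalan 0 = 1. Proof. by rewrite /catalan cbin0 divr1. Qed.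

Lemma cbinS m : m.+1%:R * cbin m.+1 = (4 * m%:R + 2) * cbin m.
Proof. by rewrite /cbin -natrM mulnC bin_double_succ natrM natrD natrM. Qed.

Lemma cbinSE m : cbin m.+1 = (4 * m%:R + 2) * cbin m / m.+1%:R.
Proof. by rewrite -cbinS mulrC mulKf // pnatr_eq0. Qed.

Lemma catalanE m : m.+1%:R * catalan m = cbin m.
Proof. by rewrite /catalan mulrC divfK // pnatr_eq0. Qed.

Lemma conv_natmul_cbin g N : conv (fun a => a%:R * cbin a) g N.+1 =
  4 * conv (fun a => a%:R * cbin a) g N + 2 * conv cbin g N.
Proof.
rewrite conv_recl mul0r add0r -!convZl -convDl.
by apply: eq_conv => a _ //=; rewrite cbinS; ring.
Qed.

Lemma conv_cbin_cbin N : conv cbin cbin N = 4 ^+ N.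
Proof.
(* Splitting the weight [n] as [a + (n - a)] ties [conv cbin cbin] to the weighted
   convolution, whose recurrence [conv_natmul_cbin] closes the induction. *)
have weighted n : n%:R * conv cbin cbin n = 2 * conv (fun a => a%:R * cbin a) cbin n.
  rewrite (@conv_weight (fun a => a%:R) (fun b => b%:R)) => [|a le_an]; last first.
    by rewrite -natrD subnKC.
  by rewrite [X in _ + X]convC; ring.
elim: N => [|N IH]; first by rewrite /conv big_nat1 /cbin.
apply: (@mulfI _ N.+1%:R); first by rewrite pnatr_eq0.
rewrite weighted conv_natmul_cbin IH.
by have := weighted N; rewrite IH mulrDr mulrCA => <-; rewrite exprS -natr1; ring.
Qed.

Lemma conv_cbin_catalan N : conv cbin catalan N = cbin N.+1 / 2.
Proof.
have weighted n : n.+1%:R * conv cbin catalan n =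
    conv (fun a => a%:R * cbin a) catalan n + 4 ^+ n.
  rewrite (@conv_weight (fun a => a%:R) (fun b => b.+1%:R)) => [|a le_an]; last first.
    by rewrite -natrD addnS subnKC.
  by rewrite -conv_cbin_cbin; congr (_ + _); apply: eq_conv => // b _; rewrite catalanE.
elim: N => [|N IH]; first by rewrite /conv big_nat1 catalan0 cbin0 cbin1 mul1r divff.
apply: (@mulfI _ N.+2%:R); first by rewrite pnatr_eq0.
rewrite weighted conv_natmul_cbin IH [RHS]mulrA cbinS.
have -> : conv (fun a => a%:R * cbin a) catalan N = N.+1%:R * (cbin N.+1 / 2) - 4 ^+ N.
  by rewrite -IH weighted; ring.
by rewrite exprS; field.
Qed.

Lemma conv_catalan_catalan N : conv catalan catalan N = catalan N.+1.
Proof.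
apply: (@mulfI _ N.+2%:R); first by rewrite pnatr_eq0.
rewrite catalanE (@conv_weight (fun a => a.+1%:R) (fun b => b.+1%:R)); last first.
  by move=> a le_aN; rewrite -natrD addSn addnS subnKC.
have -> : conv catalan (fun b => b.+1%:R * catalan b) N = conv cbin catalan N.
  by rewrite convC; apply: eq_conv => // a _; rewrite catalanE.
have -> : conv (fun a => a.+1%:R * catalan a) catalan N = conv cbin catalan N.
  by apply: eq_conv => // a _; rewrite catalanE.
by rewrite conv_cbin_catalan; field.
Qed.

Lemma conv_pow4_catalan N :
  conv (fun a => 4 ^+ a) catalan N = (4 ^+ N.+1 - cbin N.+1) / 2.
Proof.
elim: N => [|N IH]; first by rewrite /conv big_nat1 catalan0 cbin1 mulr1 expr0 expr1; field.
rewrite conv_recl mul1r (@eq_conv _ (fun a => 4 * 4 ^+ a) _ catalan) ?convZl ?IH //.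
  rewrite /catalan (cbinSE N.+1) !exprS -!natr1.
  by have := ler0n rat N; move: N%:R => n n_ge0; field_nz.
by move=> a _; rewrite exprS.
Qed.

Lemma conv_pow4_cbin N : conv (fun a => 4 ^+ a) cbin N = (2 * N%:R + 1) * cbin N.
Proof.
elim: N => [|N IH]; first by rewrite /conv big_nat1 cbin0 expr0; field.
rewrite conv_recl mul1r (@eq_conv _ (fun a => 4 * 4 ^+ a) _ cbin) ?convZl ?IH //.
  rewrite (cbinSE N) -!natr1.
  by have := ler0n rat N; move: N%:R => n n_ge0; field_nz.
by move=> a _; rewrite exprS.
Qed.

Lemma conv_natmul_pow4_catalan N :
  conv (fun a => a%:R * 4 ^+ a) catalan N =
  N.+1%:R * 4 ^+ N.+1 / 2 - 2 * (2 * N%:R + 1) * cbin N.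
Proof.
elim: N => [|N IH]; first by rewrite /conv big_nat1 cbin0 catalan0; field.
rewrite conv_recl mul0r add0r.
rewrite (@eq_conv _ (fun a => 4 * (a%:R * 4 ^+ a) + 4 * 4 ^+ a) _ catalan); first last.
- by [].
- by move=> a _; rewrite exprS -natr1; ring.
rewrite convDl !convZl IH conv_pow4_catalan (cbinSE N) !exprS -!natr1.
by have := ler0n rat N; move: N%:R => n n_ge0; field_nz.
Qed.

(* Indexed by the number of edges, so that the join decomposition of
   [tree_sum F m.+1] is a convolution. *)
Definition tree_sum (F : ptree -> rat) m := \sum_(t <- trees m.+1) F t.

Definition join_sum (H : ptree -> ptree -> rat) N :=
  \sum_(0 <= a < N.+1) \sum_(x <- trees a.+1) \sum_(y <- trees (N - a).+1) H x y.

Lemma tree_sum0 F : tree_sum F 0 = F leaf.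
Proof. exact: big_seq1. Qed.

Lemma tree_sum_join F N : tree_sum F N.+1 = join_sum (fun x y => F (join x y)) N.
Proof.
rewrite /tree_sum trees_step big_allpairs_dep -[iota 1 _]/(iota (1 + 0) N.+1) iotaDl big_map.
rewrite -[iota 0 N.+1]/(index_iota 0 N.+1).
apply: eq_big_nat => a /andP[_ lt_aN]; rewrite big_allpairs add1n subSS subSn //.
Qed.

Lemma eq_join_sum H1 H2 N : (forall x y, H1 x y = H2 x y) -> join_sum H1 N = join_sum H2 N.
Proof. by move=> eqH; apply: eq_bigr => a _; apply: eq_bigr => x _; apply: eq_bigr. Qed.

Lemma join_sumD H1 H2 N : join_sum (fun x y => H1 x y + H2 x y) N = join_sum H1 N + join_sum H2 N.
Proof.
rewrite /join_sum -big_split; apply: eq_bigr => a _.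
by rewrite -big_split; apply: eq_bigr => x _; rewrite big_split.
Qed.

Lemma join_sumZ c H N : join_sum (fun x y => c * H x y) N = c * join_sum H N.
Proof.
rewrite /join_sum mulr_sumr; apply: eq_bigr => a _.
by rewrite mulr_sumr; apply: eq_bigr => x _; rewrite mulr_sumr.
Qed.

Lemma join_sum_mul F G N : join_sum (fun x y => F x * G y) N = conv (tree_sum F) (tree_sum G) N.
Proof. by apply: eq_bigr => a _; rewrite big_distrlr. Qed.

Lemma tree_sum_count m : tree_sum (fun=> 1) m = catalan m.
Proof.
elim/ltn_ind: m => -[_|N IH]; first by rewrite tree_sum0 catalan0.
rewrite tree_sum_join (@eq_join_sum _ (fun x y => 1 * 1)) ?join_sum_mul => [|x y].
  by rewrite (eq_conv IH IH) conv_catalan_catalan.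
by rewrite mulr1.
Qed.

Lemma tree_sum_ptsize m : tree_sum (fun t => (ptsize t)%:R) m = cbin m.
Proof.
rewrite -catalanE -tree_sum_count /tree_sum mulr_sumr; apply: eq_big_seq => t.
by rewrite mem_trees // => /eqP ->; rewrite mulr1.
Qed.

Lemma tree_sum_is_leaf m : tree_sum (fun t => (is_leaf t)%:R) m = (m == 0)%:R.
Proof.
case: m => [|N]; first by rewrite tree_sum0.
by rewrite /tree_sum big1_seq // => -[[|c cs]] /andP[_] //; rewrite mem_trees.
Qed.

Lemma tree_sum_depth_sum m : tree_sum (fun t => (depth_sum t)%:R) m = (4 ^+ m - cbin m) / 2.
Proof.
elim/ltn_ind: m => -[_|N IH].
  by rewrite tree_sum0 /depth_sum big_seq1 cbin0 expr0 subrr mul0r.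
rewrite tree_sum_join (@eq_join_sum _ (fun x y =>
    (depth_sum x)%:R * 1 + (ptsize x)%:R * 1 + 1 * (depth_sum y)%:R)); last first.
  by move=> x y; rewrite depth_sum_join !natrD !mulr1 mul1r.
rewrite !join_sumD !join_sum_mul (eq_conv IH (fun a _ => tree_sum_count a)).
rewrite (eq_conv (fun a _ => tree_sum_ptsize a) (fun a _ => tree_sum_count a)).
rewrite (eq_conv (fun a _ => tree_sum_count a) IH) [conv catalan _ _]convC -!convDl.
rewrite (@eq_conv _ (fun a => 4 ^+ a) _ catalan) ?conv_pow4_catalan // => a _.
by field.
Qed.

Lemma tree_sum_dist_sum m : tree_sum (fun t => (dist_sum t)%:R) m = m%:R * 4 ^+ m / 2.
Proof.
elim/ltn_ind: m => -[_|N IH]; first by rewrite tree_sum0 /dist_sum !big_seq1 mul0r.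
rewrite tree_sum_join (@eq_join_sum _ (fun x y =>
    (dist_sum x)%:R * 1 + 1 * (dist_sum y)%:R + 2 * ((depth_sum x)%:R * (ptsize y)%:R
     + (ptsize x)%:R * (ptsize y)%:R + (ptsize x)%:R * (depth_sum y)%:R))); last first.
  by move=> x y; rewrite dist_sum_join !natrD !natrM; ring.
rewrite (@join_sumD (fun x y => (dist_sum x)%:R * 1 + 1 * (dist_sum y)%:R)).
rewrite join_sumZ !join_sumD !join_sum_mul.
rewrite (eq_conv IH (fun a _ => tree_sum_count a)) (eq_conv (fun a _ => tree_sum_count a) IH).
rewrite (eq_conv (fun a _ => tree_sum_depth_sum a) (fun a _ => tree_sum_ptsize a)).
rewrite (eq_conv (fun a _ => tree_sum_ptsize a) (fun a _ => tree_sum_ptsize a)).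
rewrite (eq_conv (fun a _ => tree_sum_ptsize a) (fun a _ => tree_sum_depth_sum a)).
rewrite [conv catalan _ _]convC (@convC cbin (fun a => (4 ^+ a - cbin a) / 2)) -!convDl.
rewrite (@eq_conv _ (fun a => a%:R * 4 ^+ a) catalan catalan) => [|a _|//]; last by field.
rewrite (@eq_conv _ (fun a => 4 ^+ a) cbin cbin) => [|a _|//]; last by field.
by rewrite conv_natmul_pow4_catalan conv_pow4_cbin; field.
Qed.

Lemma tree_sum_size_leaves m :
  tree_sum (fun t => (size (leaves t))%:R) m = (cbin m + (m == 0%N)%:R) / 2.
Proof.
elim/ltn_ind: m => -[_|N IH]; first by rewrite tree_sum0 cbin0 /=; field.
rewrite tree_sum_join (@eq_join_sum _ (fun x y => (size (leaves x))%:R * 1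
    + 1 * (size (leaves y))%:R + -1 * (1 * (is_leaf y)%:R))); last first.
  by move=> x y; apply: (addIr (is_leaf y)%:R); rewrite -natrD size_leaves_join natrD; ring.
rewrite !join_sumD (join_sumZ (-1)) !join_sum_mul.
rewrite (eq_conv IH (fun a _ => tree_sum_count a)) (eq_conv (fun a _ => tree_sum_count a) IH).
rewrite (eq_conv (fun a _ => tree_sum_count a) (fun a _ => tree_sum_is_leaf a)).
rewrite !(convC catalan) -convZl -!convDl.
rewrite (@eq_conv _ cbin catalan catalan) => [|a _|//]; last by field.
by rewrite conv_cbin_catalan /= addr0.
Qed.

Lemma tree_sum_leaf_depth_sum m :
  tree_sum (fun t => (leaf_depth_sum t)%:R) m = (4 ^+ m - (m == 0%N)%:R) / 4.
Proof.
elim/ltn_ind: m => -[_|N IH].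
  by rewrite tree_sum0 /leaf_depth_sum big_seq1 expr0 subrr mul0r.
rewrite tree_sum_join (@eq_join_sum _ (fun x y => (leaf_depth_sum x)%:R * 1
    + (size (leaves x))%:R * 1 + 1 * (leaf_depth_sum y)%:R)); last first.
  by move=> x y; rewrite leaf_depth_sum_join !natrD !mulr1 mul1r.
rewrite !join_sumD !join_sum_mul.
rewrite (eq_conv IH (fun a _ => tree_sum_count a)) (eq_conv (fun a _ => tree_sum_count a) IH).
rewrite (eq_conv (fun a _ => tree_sum_size_leaves a) (fun a _ => tree_sum_count a)).
rewrite (convC catalan) -!convDl.
rewrite (@eq_conv _ (fun a => 2^-1 * 4 ^+ a + 2^-1 * cbin a) catalan catalan) => [|a _|//].
  by rewrite convDl !convZl conv_pow4_catalan conv_cbin_catalan /= subr0; field.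
by case: a => [|a]; field.
Qed.

Lemma dfact_ratio k : (dfact k.*2)%:R / (dfact k.*2.-1)%:R = 4 ^+ k / cbin k :> rat.
Proof.
case: k => [|k]; first by rewrite cbin0 !divr1.
have : (dfact k.+1.*2 * dfact k.+1.*2.-1 = 'C(k.+1.*2, k.+1) * (k.+1`! * k.+1`!))%N.
  rewrite (dfact_mulS k.*2.+1) -(@bin_fact k.+1.*2 k.+1) -?addnn ?leq_addr //.
  by rewrite addnK.
have := dfact_gt0 k.+1.*2.-1; have := fact_gt0 k.+1; rewrite dfact_double.
set O := dfact _; set f := k.+1`!; clearbody O f; rewrite -!(ltr0n rat) => f_gt0 O_gt0.
move/(congr1 (fun x => x%:R : rat)); rewrite !natrM natrX -/(cbin k.+1) => e.
have cbinE : cbin k.+1 * f%:R = 2 ^+ k.+1 * O%:R.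
  by apply: (mulIf (lt0r_neq0 f_gt0)); rewrite -mulrA -e; ring.
rewrite -[cbin k.+1](mulfK (lt0r_neq0 f_gt0)) cbinE (_ : 4 = 2 * 2) ?exprMn //.
by field; rewrite !lt0r_neq0 ?exprn_gt0.
Qed.

Lemma perm_trees n s : (0 < n)%N -> List.NoDup s ->
  (forall t, List.In t s <-> ptsize t = n) -> perm_eq s (trees n).
Proof.
move=> n_gt0 s_nodup s_mem; apply: uniq_perm; [exact: NoDup_uniq | exact: trees_uniq |].
by move=> t; rewrite mem_trees //; apply/idP/eqP => [/In_mem/s_mem | /s_mem/In_mem].
Qed.

Lemma size_trees m : (size (trees m.+1))%:R = catalan m.
Proof. by rewrite -tree_sum_count /tree_sum -sum1_size natr_sum. Qed.

Lemma sum_wiener_trees m : \sum_(t <- trees m.+2) wiener t = (m.+1 * 4 ^ m)%N.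
Proof.
have dist_total : (2 * \sum_(t <- trees m.+2) wiener t)%:R = m.+1%:R * 4 ^+ m.+1 / 2 :> rat.
  rewrite big_distrr /= (eq_bigr _ (fun t _ => wiener_dist_sum t)) natr_sum.
  exact: tree_sum_dist_sum.
apply/eqP; rewrite -(eqr_nat rat) natrM natrX; apply/eqP; apply: (@mulfI _ 2) => //.
by rewrite -natrM dist_total exprS; field.
Qed.

Lemma mean_distance_trees m :
  (\sum_(t <- trees m.+2) wiener t)%:R / ((size (trees m.+2))%:R * 'C(m.+2, 2)%:R)
  = 2 * 4 ^+ m / cbin m.+1.
Proof.
have binE : 'C(m.+2, 2)%:R = m.+2%:R * m.+1%:R / 2 :> rat.
  apply: (@mulfI _ 2) => //.
  by rewrite -[LHS]natrM -(mul_bin_diag m.+2 1) bin1 natrM [m.+2.-1]/=; field.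
rewrite sum_wiener_trees size_trees binE natrM natrX /catalan.
by have := cbin_gt0 m.+1; have := ler0n rat m; rewrite /cbin => ? ?; field_nz.
Qed.

Lemma mean_leaf_depth_trees m :
  (\sum_(t <- trees m.+2) leaf_depth_sum t)%:R / (\sum_(t <- trees m.+2) size (leaves t))%:R
  = 2 * 4 ^+ m / cbin m.+1.
Proof.
rewrite !natr_sum; move: (tree_sum_leaf_depth_sum m.+1) (tree_sum_size_leaves m.+1).
rewrite /tree_sum => -> ->.
by rewrite /= exprS subr0 addr0; field; rewrite lt0r_neq0 ?cbin_gt0.
Qed.

Theorem corollary3p3 (n : nat) (hn : (2 <= n)%N) (s : seq ptree)
    (hs_nodup : List.NoDup s)
    (hs_all : forall t : ptree, List.In t s <-> ptsize t = n) :
  (\sum_(t <- s) wiener t = (n - 1) * 4 ^ (n - 2))%N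
  /\ ((\sum_(t <- s) wiener t)%:R / ((size s)%:R * ('C(n, 2))%:R) : rat)
       = (dfact (2 * n - 2))%:R / (2 * (dfact (2 * n - 3))%:R)
  /\ ((\sum_(t <- s) \sum_(l <- leaves t) size l)%:R
        / (\sum_(t <- s) size (leaves t))%:R : rat)
       = (dfact (2 * n - 2))%:R / (2 * (dfact (2 * n - 3))%:R).
Proof.
case: n hn hs_all => [|[|m]] // _ hs_all.
have perm_s := perm_trees (ltn0Sn _) hs_nodup hs_all.
have -> : (dfact (2 * m.+2 - 2))%:R / (2 * (dfact (2 * m.+2 - 3))%:R)
    = 2 * 4 ^+ m / cbin m.+1 :> rat.
  have -> : (2 * m.+2 - 2 = m.+1.*2)%N by rewrite -addnn; lia.
  have -> : (2 * m.+2 - 3 = m.+1.*2.-1)%N by rewrite -addnn; lia.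
  rewrite invfM mulrCA dfact_ratio exprS.
  by field; rewrite lt0r_neq0 ?cbin_gt0.
rewrite !(perm_big _ perm_s) (perm_size perm_s) /=.
split; first by rewrite sum_wiener_trees subn1 subn2.
by split; [exact: mean_distance_trees | exact: mean_leaf_depth_trees].
Qed.
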